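(* For every $\epsilon$, the class $\mathbf{RMM}_\epsilon$ is closed under complement, under inverse homomorphisms and under word quotients. That is, if $L\subseteq\Sigma^*$ belongs to $\mathbf{RMM}_\epsilon$, then so do $\Sigma^*\setminus L$, $h^{-1}(L)=\{x\in\Sigma^*: h(x)\in L\}$ for every monoid homomorphism $h:\Sigma^*\to\Sigma^*$, and $w^{-1}L=\{x: wx\in L\}$ and $Lw^{-1}=\{x: xw\in L\}$ for every $w\in\Sigma^*$.
   Context: A measure-many quantum finite automaton (MM-QFA) over a finite alphabet $\Sigma$ is a tuple $M=(Q,\Sigma,\{U_\sigma\}_{\sigma\in\Sigma\cup\{\$\}},q_0,Q_{acc},Q_{rej})$, where $Q$ is a finite set of states indexing an orthonormal basis $\{|q\rangle\}$ of $\mathbb{C}^Q$, $\$\notin\Sigma$ is an end-marker, each $U_\sigma$ is unitary, $q_0$ is the initial state, and $Q$ is partitioned into accepting halting states $Q_{acc}$, rejecting halting states $Q_{rej}$ and non-halting states $Q_{non}$; let $P_{acc},P_{rej},P_{non}$ be the orthogonal projections onto the spans of the corresponding basis vectors. On input $x\in\Sigma^*$ the machine processes the symbols of $x\$$ one at a time, maintaining a triple $(\psi,p_{acc},p_{rej})$ initialised to $(|q_0\rangle,0,0)$: on reading $\sigma$ it sets $\psi'=U_\sigma\psi$, adds $\|P_{acc}\psi'\|^2$ to $p_{acc}$ and $\|P_{rej}\psi'\|^2$ to $p_{rej}$, and replaces $\psi$ by $P_{non}\psi'$. The acceptance probability $p_M(x)$ is the final value of $p_{acc}$. $M$ accepts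 $L$ with cut-point $\lambda$ and margin $\epsilon>0$ if $p_M(x)>\lambda+\epsilon$ for $x\in L$ and $p_M(x)<\lambda-\epsilon$ for $x\notin L$. $\mathbf{RMM}_\epsilon$ is the class of languages accepted by some MM-QFA (with some cut-point) with margin at least $\epsilon$. *)

From HB Require Import structures.
From mathcomp Require Import all_boot all_order all_algebra.
From mathcomp Require Import spectral.
From mathcomp Require Import complex.
From mathcomp Require Import reals.
Set Implicit Arguments. Unset Strict Implicit. Unset Printing Implicit Defensive.
Import Order.TTheory GRing.Theory Num.Theory.
Local Open Scope ring_scope.

(* Measure-many QFA over alphabet Sigma.  States are 'I_n; the input alphabet
   extended by the end-marker $ is  option Sigma  (None = $).  Q_non is the
   complement of Q_acc :|: Q_rej. *)
Record mmqfa (R : realType) (Sigma : finType) := MMQFA {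
  qfa_n : nat;
  qfa_U : option Sigma -> 'M[R[i]]_qfa_n;
  qfa_unitary : forall s, qfa_U s \is unitarymx;
  qfa_q0 : 'I_qfa_n;
  qfa_acc : {set 'I_qfa_n};
  qfa_rej : {set 'I_qfa_n};
  qfa_disj : [disjoint qfa_acc & qfa_rej]
}.

Section MMQFA.
Variables (R : realType) (Sigma : finType) (M : mmqfa R Sigma).
Local Notation n := (qfa_n M).

Definition sqmod (z : R[i]) : R := (complex.Re z) ^+ 2 + (complex.Im z) ^+ 2.

Definition proj_prob (A : {set 'I_n}) (psi : 'cV[R[i]]_n) : R :=
  \sum_(q in A) sqmod (psi q 0).

Definition non_halting : {set 'I_n} := ~: (qfa_acc M :|: qfa_rej M).

Definition proj_non (psi : 'cV[R[i]]_n) : 'cV[R[i]]_n :=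
  \col_(q < n) (if q \in non_halting then psi q 0 else 0).

Definition init_vec : 'cV[R[i]]_n := \col_(q < n) (if q == qfa_q0 M then 1 else 0).

Definition qfa_step (st : 'cV[R[i]]_n * R * R) (s : option Sigma)
  : 'cV[R[i]]_n * R * R :=
  let: (psi, pa, pr) := st in
  let psi' := qfa_U M s *m psi in
  (proj_non psi', pa + proj_prob (qfa_acc M) psi', pr + proj_prob (qfa_rej M) psi').

Definition acc_prob (x : seq Sigma) : R :=
  (foldl qfa_step (init_vec, 0, 0) (rcons (map Some x) None)).1.2.

End MMQFA.

Definition accepts_with (R : realType) (Sigma : finType) (M : mmqfa R Sigma)
  (L : seq Sigma -> Prop) (lambda eps : R) : Prop :=
  0 < eps /\
  forall x : seq Sigma,
    (L x -> lambda + eps < acc_prob M x) /\ (~ L x -> acc_prob M x < lambda - eps).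

Definition RMM (R : realType) (Sigma : finType) (eps : R) (L : seq Sigma -> Prop) : Prop :=
  exists (M : mmqfa R Sigma) (lambda eps' : R), eps <= eps' /\ accepts_with M L lambda eps'.

Definition monoid_hom (Sigma : finType) (h : seq Sigma -> seq Sigma) : Prop :=
  h [::] = [::] /\ forall x y, h (x ++ y) = h x ++ h y.

From mathcomp Require Import all_boot all_order all_algebra perm.
From mathcomp Require Import spectral complex reals ring lra.
From Stdlib Require Import FunctionalExtensionality Classical_Prop.
Import Order.TTheory GRing.Theory Num.Theory.
Local Open Scope ring_scope.
Set Implicit Arguments. Unset Strict Implicit. Unset Printing Implicit Defensive.

(* For the
   complement, inverse homomorphisms and right quotients, every letter of the
   new machine runs a fixed program of micro-steps of the old one: apply U_t,
   then move the amplitude on a set B of states into a fresh halting copy of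
   the state space, which accepts exactly on a prescribed set A'.  Inverse
   homomorphisms and right quotients take B = the halting states and
   A' = Q_acc, and run h(a) on each letter a, resp. w$ on the end-marker.  The
   complement takes A' = the complement of Q_acc and dumps every state at the
   end-marker, so p(x) becomes 1 - p(x) and the cut-point becomes 1 - lambda.
   For the left quotient, let psi be the non-halting state after reading w.  A
   Householder reflection fixing the halting states maps a basis state e_q to
   psi / |psi| up to a phase; conjugating each U_s by it gives a machine with
   p'(x) = (p(wx) - p_acc(w)) / |psi|^2.  This affine change enlarges the
   margin, because |psi| <= 1.  If psi = 0, then p(wx) does not depend on x. *)

Section MMQFAClosure.
Variables (R : realType) (Sigma : finType).
Local Notation C := R[i].
Local Notation "x %:C" := (real_complex R x).

Lemma sqmodE (z : C) : (sqmod z)%:C = z * z^*.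
Proof. by rewrite /sqmod add_Re2_Im2 normCK. Qed.

Lemma sqmod_ge0 (z : C) : 0 <= sqmod z.
Proof. by rewrite /sqmod addr_ge0 // sqr_ge0. Qed.

Lemma sqmodM (a b : C) : sqmod (a * b) = sqmod a * sqmod b.
Proof. by apply: (@complexI R); rewrite rmorphM /= !sqmodE rmorphM mulrACA. Qed.

Lemma sqmod0 : sqmod (0 : C) = 0.
Proof. by apply: (@complexI R); rewrite sqmodE mul0r. Qed.

Lemma sqmod_eq0 (z : C) : (sqmod z == 0) = (z == 0).
Proof.
by rewrite -(inj_eq (@complexI R)) sqmodE mulf_eq0 conjC_eq0 orbb.
Qed.

Lemma sqmod_real (y : R) : sqmod y%:C = y ^+ 2.
Proof. by rewrite /sqmod /= expr0n addr0. Qed.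

Section Vectors.
Variable T : finType.
Implicit Types (u v : T -> C) (f : (T -> C) -> T -> C).

Definition basis_vec (y : T) : T -> C := fun x => (x == y)%:R.
Definition dotv u v : C := \sum_x (u x)^* * v x.
Definition mulmxv (U : T -> T -> C) v : T -> C := fun x => \sum_y U x y * v y.
Definition scalev (c : C) v : T -> C := fun x => c * v x.
Definition mass (A : {set T}) v : R := \sum_(x in A) sqmod (v x).
Definition norm2 v : R := \sum_x sqmod (v x).

Definition orthonormal_cols (U : T -> T -> C) :=
  forall y z, \sum_x (U x y)^* * U x z = (y == z)%:R.
Definition linearf f := forall (J : finType) (c : J -> C) (g : J -> T -> C),
  f (fun x => \sum_j c j * g j x) = fun x => \sum_j c j * f (g j) x.
Definition isometric f := forall u v, dotv (f u) (f v) = dotv u v.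

Lemma sum_basis_vec (F : T -> C) y : \sum_x basis_vec y x * F x = F y.
Proof.
rewrite (bigD1 y) //= /basis_vec eqxx mul1r big1 ?addr0 // => x /negbTE ->.
exact: mul0r.
Qed.

Lemma vec_basis_expansion v : v = fun x => \sum_y v y * basis_vec y x.
Proof.
apply: functional_extensionality => x; rewrite -[LHS](sum_basis_vec v x).
by apply: eq_bigr => y _; rewrite /basis_vec eq_sym mulrC.
Qed.

Lemma dotv_basisl y v : dotv (basis_vec y) v = v y.
Proof.
rewrite /dotv -(sum_basis_vec v y); apply: eq_bigr => x _.
by rewrite /basis_vec conjC_nat.
Qed.

Lemma dotvC u v : (dotv u v)^* = dotv v u.
Proof. by rewrite /dotv rmorph_sum; apply: eq_bigr => x _; rewrite rmorphM /= conjCK mulrC. Qed.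

Lemma dotvBr (a b u : T -> C) : dotv a (fun x => b x - u x) = dotv a b - dotv a u.
Proof. by rewrite /dotv -sumrB; apply: eq_bigr => x _; rewrite mulrBr. Qed.

Lemma dotvBl (a b u : T -> C) : dotv (fun x => a x - u x) b = dotv a b - dotv u b.
Proof. by rewrite /dotv -sumrB; apply: eq_bigr => x _; rewrite rmorphB mulrBl. Qed.

Lemma dotvZr (a b : T -> C) (c : C) : dotv a (fun x => c * b x) = c * dotv a b.
Proof. by rewrite /dotv mulr_sumr; apply: eq_bigr => x _; rewrite mulrCA. Qed.

Lemma dotvZl (a b : T -> C) (c : C) : dotv (fun x => c * a x) b = c^* * dotv a b.
Proof. by rewrite /dotv mulr_sumr; apply: eq_bigr => x _; rewrite rmorphM mulrA. Qed.

Lemma dotv_sumr u (J : finType) (c : J -> C) (g : J -> T -> C) :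
  dotv u (fun x => \sum_j c j * g j x) = \sum_j c j * dotv u (g j).
Proof.
rewrite /dotv; under eq_bigr do rewrite mulr_sumr.
rewrite exchange_big; apply: eq_bigr => j _; rewrite mulr_sumr.
by apply: eq_bigr => x _; rewrite mulrCA.
Qed.

Lemma norm2_dotv v : (norm2 v)%:C = dotv v v.
Proof. by rewrite /norm2 raddf_sum; apply: eq_bigr => x _; rewrite mulrC -sqmodE. Qed.

Lemma norm2_ge0 v : 0 <= norm2 v.
Proof. by apply: sumr_ge0 => x _; exact: sqmod_ge0. Qed.

Lemma mass_ge0 A v : 0 <= mass A v.
Proof. by apply: sumr_ge0 => x _; exact: sqmod_ge0. Qed.

Lemma norm2_basis_vec y : norm2 (basis_vec y) = 1.
Proof. by apply: (@complexI R); rewrite norm2_dotv dotv_basisl /basis_vec eqxx. Qed.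

Lemma norm2_eq0 v : norm2 v = 0 -> v = fun _ => 0.
Proof.
move=> v0; apply: functional_extensionality => x; apply/eqP; rewrite -sqmod_eq0.
by apply/eqP/(psumr_eq0P (P := predT) _ v0) => // y _; exact: sqmod_ge0.
Qed.

Lemma vec0_or_support v : v = (fun _ => 0) \/ exists q, v q != 0.
Proof.
case: (pickP (fun q => v q != 0)) => [q vq|v0]; first by right; exists q.
by left; apply: functional_extensionality => q; apply/eqP/negbFE/v0.
Qed.

Lemma norm2_gt0 v q : v q != 0 -> 0 < norm2 v.
Proof.
move=> vq; rewrite lt_def norm2_ge0 andbT; apply: contra vq => /eqP /norm2_eq0 v0.
by rewrite v0.
Qed.

Lemma unit_rescaling (psi : T -> C) q : psi q != 0 ->
  exists c : C, sqmod c = (norm2 psi)^-1 /\ (c * psi q)^* = c * psi q.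
Proof.
move=> psi_q; have n_gt0 := norm2_gt0 psi_q.
have phase_p : (psi q)^* / `|psi q| * psi q = `|psi q|.
  by rewrite mulrAC -normCKC expr2 mulfK // normr_eq0.
have phase_1 : sqmod ((psi q)^* / `|psi q|) = 1.
  apply: (@complexI R); rewrite sqmodE rmorphM fmorphV /= conjCK conj_normC.
  by rewrite mulrA phase_p divff ?normr_eq0.
exists ((psi q)^* / `|psi q| * ((Num.sqrt (norm2 psi))^-1)%:C); split.
  by rewrite sqmodM phase_1 mul1r sqmod_real exprVn sqr_sqrtr // ltW.
by rewrite mulrAC phase_p geC0_conj // mulr_ge0 // ler0c invr_ge0 sqrtr_ge0.
Qed.

Lemma mass_setC A v : mass A v + mass (~: A) v = norm2 v.
Proof.
rewrite /mass /norm2 [in RHS](bigID (mem A)) /=.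
by congr (_ + _); apply: eq_bigl => x; rewrite inE.
Qed.

Lemma mass_scalev A c v : mass A (scalev c v) = sqmod c * mass A v.
Proof. by rewrite /mass mulr_sumr; apply: eq_bigr => x _; rewrite sqmodM. Qed.

Lemma norm2_scalev c v : norm2 (scalev c v) = sqmod c * norm2 v.
Proof. by rewrite /norm2 mulr_sumr; apply: eq_bigr => x _; rewrite sqmodM. Qed.

Lemma mulmxv_scalev U c v : mulmxv U (scalev c v) = scalev c (mulmxv U v).
Proof.
apply: functional_extensionality => x; rewrite /mulmxv /scalev mulr_sumr.
by apply: eq_bigr => y _; rewrite mulrCA.
Qed.

Lemma mulmxv_linear U : linearf (mulmxv U).
Proof.
move=> J c g; apply: functional_extensionality => x; rewrite /mulmxv.
under eq_bigr do rewrite mulr_sumr.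
rewrite exchange_big; apply: eq_bigr => j _; rewrite mulr_sumr.
by apply: eq_bigr => y _; rewrite mulrCA.
Qed.

Lemma mulmxv_isometric U : orthonormal_cols U -> isometric (mulmxv U).
Proof.
move=> U_orth u v; rewrite /dotv /mulmxv.
under eq_bigr do rewrite rmorph_sum mulr_suml.
rewrite exchange_big; apply: eq_bigr => y _.
under eq_bigr do rewrite mulr_sumr.
rewrite exchange_big /= -(sum_basis_vec (fun z => (u y)^* * v z) y).
apply: eq_bigr => z _; rewrite /basis_vec eq_sym -U_orth mulr_suml.
by apply: eq_bigr => x _; rewrite rmorphM; ring.
Qed.

Lemma linearf_comp f g : linearf f -> linearf g -> linearf (fun P => f (g P)).
Proof. by move=> f_lin g_lin J c h; rewrite g_lin f_lin. Qed.

Lemma isometric_comp f g : isometric f -> isometric g -> isometric (fun P => f (g P)).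
Proof. by move=> f_iso g_iso u v; rewrite f_iso g_iso. Qed.

Definition mx_of_fun f : T -> T -> C := fun x y => f (basis_vec y) x.

Lemma mx_of_fun_orthonormal f : isometric f -> orthonormal_cols (mx_of_fun f).
Proof. by move=> f_iso y z; have := f_iso (basis_vec y) (basis_vec z); rewrite dotv_basisl. Qed.

Lemma mulmxv_mx_of_fun f : linearf f -> forall v, mulmxv (mx_of_fun f) v = f v.
Proof.
move=> f_lin v; rewrite [in RHS](vec_basis_expansion v) f_lin.
by apply: functional_extensionality => x; apply: eq_bigr => y _; rewrite mulrC.
Qed.

End Vectors.

(* Machines over an arbitrary finite state type, with matrices as functions:
   the constructions below use product state spaces, which would otherwise
   have to be re-indexed into ['I_n]. *)
Record qfa (T : finType) := QFA {
  qU : option Sigma -> T -> T -> C;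
  qU_orthonormal : forall s, orthonormal_cols (qU s);
  qstart : T;
  qacc : {set T};
  qrej : {set T};
  qacc_rej_disjoint : [disjoint qacc & qrej] }.

Section Run.
Variables (T : finType) (M : qfa T).
Implicit Types (v : T -> C) (l : seq (option Sigma)).

Definition live : {set T} := ~: (qacc M :|: qrej M).
Definition proj_live v : T -> C := fun x => if x \in live then v x else 0.

Fixpoint run v l : (T -> C) * R * R :=
  if l is s :: l' then
    let v' := mulmxv (qU M s) v in
    let r := run (proj_live v') l' in
    (r.1.1, mass (qacc M) v' + r.1.2, mass (qrej M) v' + r.2)
  else (v, 0, 0).

Definition accp (x : seq Sigma) : R :=
  (run (basis_vec (qstart M)) (rcons (map Some x) None)).1.2.

Lemma in_live x : (x \in live) = (x \notin qacc M) && (x \notin qrej M).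
Proof. by rewrite !inE negb_or. Qed.

Lemma norm2_mulmxv s v : norm2 (mulmxv (qU M s) v) = norm2 v.
Proof.
apply: (@complexI R); rewrite !norm2_dotv.
exact/mulmxv_isometric/qU_orthonormal.
Qed.

Lemma norm2_split v : norm2 v = norm2 (proj_live v) + mass (qacc M) v + mass (qrej M) v.
Proof.
rewrite /norm2 /mass /proj_live !(big_mkcond (fun x => x \in _)) -!big_split /=.
apply: eq_bigr => x _; rewrite in_live.
case: (boolP (x \in qacc M)) => [xA|_] /=.
  by rewrite (disjointFr (qacc_rej_disjoint M) xA) /= sqmod0 add0r addr0.
by case: (x \in qrej M); rewrite /= ?sqmod0 ?addr0 ?add0r.
Qed.

Lemma run_conserv l v : norm2 v = norm2 (run v l).1.1 + (run v l).1.2 + (run v l).2.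
Proof.
elim: l v => [|s l IH] v /=; first by rewrite !addr0.
by rewrite -(norm2_mulmxv s v) norm2_split IH; ring.
Qed.

Lemma run_ge0 l v : 0 <= (run v l).1.2 /\ 0 <= (run v l).2.
Proof.
elim: l v => [|s l IH] v /=; first by rewrite lexx.
by have [? ?] := IH (proj_live (mulmxv (qU M s) v)); split; apply: addr_ge0; rewrite ?mass_ge0.
Qed.

Lemma accp_ge0 x : 0 <= accp x.
Proof. exact: (run_ge0 _ _).1. Qed.

Lemma accp_le1 x : accp x <= 1.
Proof.
rewrite /accp; set l := rcons _ _.
have := run_conserv l (basis_vec (qstart M)); rewrite norm2_basis_vec.
have [_ ?] := run_ge0 l (basis_vec (qstart M)).
have := norm2_ge0 (run (basis_vec (qstart M)) l).1.1; lra.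
Qed.

Lemma run_scalev c v l :
  run (scalev c v) l = (scalev c (run v l).1.1, sqmod c * (run v l).1.2, sqmod c * (run v l).2).
Proof.
elim: l v => [|s l IH] v /=; first by rewrite mulr0.
have -> : proj_live (mulmxv (qU M s) (scalev c v)) = scalev c (proj_live (mulmxv (qU M s) v)).
  apply: functional_extensionality => x.
  by rewrite mulmxv_scalev /proj_live /scalev; case: ifP; rewrite ?mulr0.
by rewrite IH mulmxv_scalev !mass_scalev !mulrDr.
Qed.

Lemma run0 l : (run (fun _ => 0) l).1.2 = 0.
Proof.
have -> : (fun _ => 0) = scalev 0 (fun _ : T => 0).
  by apply: functional_extensionality => x; rewrite /scalev mul0r.
by rewrite run_scalev sqmod0 mul0r.
Qed.

Lemma run_cat v l1 l2 : run v (l1 ++ l2) =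
  let r := run (run v l1).1.1 l2 in (r.1.1, (run v l1).1.2 + r.1.2, (run v l1).2 + r.2).
Proof.
elim: l1 v => [|s l1 IH] v /=; first by rewrite !add0r; case: (run v l2) => [[]].
by rewrite IH /= !addrA.
Qed.

Lemma run_cons_live s l v x : x \notin live -> (run v (s :: l)).1.1 x = 0.
Proof.
by elim: l s v => [|s' l IH] s v x_halt /=; [rewrite /proj_live (negbTE x_halt) | apply: IH].
Qed.

End Run.

Section MMQFAConversion.
Variables (N : mmqfa R Sigma) (T : finType) (M : qfa T) (f : 'I_(qfa_n N) -> T).
Hypotheses (f_bij : bijective f)
  (NM_U : forall s i j, qfa_U N s i j = qU M s (f i) (f j))
  (NM_acc : forall i, (i \in qfa_acc N) = (f i \in qacc M))
  (NM_rej : forall i, (i \in qfa_rej N) = (f i \in qrej M))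
  (NM_start : f (qfa_q0 N) = qstart M).

Lemma acc_prob_qfa_bij x : acc_prob N x = accp M x.
Proof.
rewrite /acc_prob /accp; set l := rcons _ _.
suff sim : forall (p : 'cV[C]_(qfa_n N)) (v : T -> C) (a r : R), (forall i, p i 0 = v (f i)) ->
    (foldl (qfa_step (M := N)) (p, a, r) l).1.2 = a + (run M v l).1.2.
  rewrite (sim _ (basis_vec (qstart M))) ?add0r // => i.
  by rewrite /init_vec mxE /basis_vec -NM_start (bij_eq f_bij); case: eqP.
elim: l => [|s l IH] p v a r pv /=; first by rewrite addr0.
have Up : forall i, (qfa_U N s *m p) i 0 = mulmxv (qU M s) v (f i).
  move=> i; rewrite mxE /mulmxv (reindex f (onW_bij _ f_bij)).
  by apply: eq_bigr => j _; rewrite NM_U pv.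
rewrite (IH _ (proj_live M (mulmxv (qU M s) v))) => [|i]; last first.
  by rewrite /proj_non mxE Up /proj_live /non_halting in_live !inE NM_acc NM_rej negb_or.
rewrite addrA; congr (_ + _ + _); rewrite /proj_prob /mass (reindex f (onW_bij _ f_bij)).
by apply: eq_big => [i|i _]; rewrite ?NM_acc ?Up.
Qed.

End MMQFAConversion.

Lemma orthonormal_colsP n (U : 'M[C]_n) :
  reflect (orthonormal_cols (fun i j => U i j)) (U \is unitarymx).
Proof.
apply: (iffP unitarymxP) => [/mulmx1C UU y z | U_orth].
  by have /matrixP /(_ y z) := UU; rewrite !mxE => <-; apply: eq_bigr => x _; rewrite !mxE.
apply: mulmx1C; apply/matrixP => y z; rewrite !mxE -U_orth.
by apply: eq_bigr => x _; rewrite !mxE.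
Qed.

Definition qfa_of_mmqfa (N : mmqfa R Sigma) : qfa 'I_(qfa_n N) :=
  QFA (fun s => elimT (orthonormal_colsP _) (qfa_unitary N s)) (qfa_q0 N) (qfa_disj N).

Lemma accp_qfa_of_mmqfa N x : accp (qfa_of_mmqfa N) x = acc_prob N x.
Proof. by rewrite (@acc_prob_qfa_bij N _ (qfa_of_mmqfa N) id) //; exists id. Qed.

Section MMQFAOfQFA.
Variables (T : finType) (M : qfa T).

Definition enum_mx s : 'M[C]_#|T| := \matrix_(i, j) qU M s (enum_val i) (enum_val j).

Lemma enum_mx_unitary s : enum_mx s \is unitarymx.
Proof.
apply/orthonormal_colsP => i j; rewrite -(inj_eq enum_val_inj) -(qU_orthonormal M s).
rewrite (reindex enum_val (onW_bij _ (@enum_val_bij T))).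
by apply: eq_bigr => x _; rewrite !mxE.
Qed.

Definition enum_set (A : {set T}) : {set 'I_#|T|} := [set i | enum_val i \in A].

Lemma enum_acc_rej_disjoint : [disjoint enum_set (qacc M) & enum_set (qrej M)].
Proof.
apply/pred0P => i /=; rewrite !inE.
by case: (boolP (enum_val i \in qacc M)) => // /(disjointFr (qacc_rej_disjoint M)) ->.
Qed.

Definition mmqfa_of_qfa : mmqfa R Sigma :=
  MMQFA enum_mx_unitary (enum_rank (qstart M)) enum_acc_rej_disjoint.

Lemma acc_prob_mmqfa_of_qfa x : acc_prob mmqfa_of_qfa x = accp M x.
Proof.
apply: (@acc_prob_qfa_bij mmqfa_of_qfa _ M enum_val) => [|s i j|i|i|];
  rewrite ?inE ?mxE ?enum_rankK //.
exact: enum_val_bij.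
Qed.

End MMQFAOfQFA.

Definition qfa_accepts T (M : qfa T) (L : seq Sigma -> Prop) (lam e : R) :=
  0 < e /\ forall x, (L x -> lam + e < accp M x) /\ (~ L x -> accp M x < lam - e).

Lemma RMM_qfa eps L T (M : qfa T) lam e : eps <= e -> qfa_accepts M L lam e -> RMM eps L.
Proof.
move=> le_eps [e_gt0 M_L]; exists (mmqfa_of_qfa M), lam, e; split => //; split => // x.
by rewrite acc_prob_mmqfa_of_qfa.
Qed.

Lemma qfa_of_RMM eps L : RMM eps L ->
  exists T (M : qfa T) lam e, eps <= e /\ qfa_accepts M L lam e.
Proof.
case=> N [lam [e [le_eps [e_gt0 N_L]]]]; exists _, (qfa_of_mmqfa N), lam, e.
by split => //; split => // x; rewrite accp_qfa_of_mmqfa.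
Qed.

Section QFAOfIsometries.
Variables (T : finType) (f : option Sigma -> (T -> C) -> T -> C).
Hypotheses (f_linear : forall s, linearf (f s)) (f_isometric : forall s, isometric (f s)).
Variables (q0 : T) (A B : {set T}) (AB : [disjoint A & B]).

Definition qfa_of_isometries : qfa T :=
  QFA (fun s => mx_of_fun_orthonormal (f_isometric s)) q0 AB.

Lemma mulmxv_qfa_of_isometries s v : mulmxv (qU qfa_of_isometries s) v = f s v.
Proof. exact: mulmxv_mx_of_fun. Qed.

End QFAOfIsometries.

Section Macro.
Variables (T : finType) (M : qfa T) (k : nat) (A' : {set T}).
Variable micro : option Sigma -> seq (option Sigma * {set T}).
Hypothesis micro_size : forall s, (size (micro s) <= k)%N.
Local Notation S := (T * 'I_k.+1)%type.
Implicit Types (P : S -> C) (v : T -> C) (B : {set T}).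

Lemma sum_slots (V : nmodType) (F : S -> V) : \sum_x F x = \sum_(i : 'I_k.+1) \sum_q F (q, i).
Proof. by rewrite [RHS]exchange_big pair_big; apply: eq_bigr => -[]. Qed.

(* State (q, 0) is the working copy of q, and (q, i) with i > 0 is the i-th
   garbage slot, a halting state.  The j-th micro-step (t, B) applies U_t to
   the working copy and then swaps it with slot j on B.  Slot j is still empty
   at that point, so the step dumps the B-part of the state into it. *)
Definition act_slot0 (U : T -> T -> C) P : S -> C :=
  fun x => if x.2 == ord0 then mulmxv U (fun q => P (q, ord0)) x.1 else P x.

Definition swap_slot B (j : 'I_k.+1) (x : S) : S :=
  if x.1 \in B then (x.1, tperm ord0 j x.2) else x.

Definition swapv B j P : S -> C := fun x => P (swap_slot B j x).

Fixpoint macro (j : nat) (u : seq (option Sigma * {set T})) P : S -> C :=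
  if u is (t, B) :: u' then macro j.+1 u' (swapv B (inord j) (act_slot0 (qU M t) P)) else P.

Lemma swap_slotK B j : involutive (swap_slot B j).
Proof.
case=> q i; rewrite /swap_slot.
by case: (boolP (q \in B)) => qB /=; rewrite ?qB ?(negbTE qB) ?tpermK.
Qed.

Lemma act_slot0_linear U : linearf (act_slot0 U).
Proof.
move=> J c g; apply: functional_extensionality => x; rewrite /act_slot0.
by case: (x.2 == ord0); rewrite ?(mulmxv_linear U c (fun j q => g j (q, ord0))).
Qed.

Lemma act_slot0_isometric U : orthonormal_cols U -> isometric (act_slot0 U).
Proof.
move=> U_orth P Q; rewrite /dotv sum_slots [RHS]sum_slots (bigD1 ord0) //= [RHS](bigD1 ord0) //=.
congr (_ + _).
  have := mulmxv_isometric U_orth (fun q => P (q, ord0)) (fun q => Q (q, ord0)).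
  by rewrite /dotv => <-; apply: eq_bigr => q _; rewrite /act_slot0.
by apply: eq_bigr => i /negbTE i0; apply: eq_bigr => q _; rewrite /act_slot0 /= i0.
Qed.

Lemma swapv_linear B j : linearf (swapv B j).
Proof. by []. Qed.

Lemma swapv_isometric B j : isometric (swapv B j).
Proof.
move=> P Q; rewrite /dotv [RHS](reindex_inj (h := swap_slot B j)) //.
exact: (can_inj (swap_slotK B j)).
Qed.

Lemma macro_linear u j : linearf (macro j u).
Proof.
elim: u j => [|[t B] u IH] j //=.
exact: linearf_comp (IH _) (linearf_comp (swapv_linear _ _) (act_slot0_linear _)).
Qed.

Lemma macro_isometric u j : isometric (macro j u).
Proof.
elim: u j => [|[t B] u IH] j //=.
apply: isometric_comp (IH _) (isometric_comp (swapv_isometric _ _) _).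
exact: act_slot0_isometric (qU_orthonormal M t).
Qed.

Fixpoint micro_run v (u : seq (option Sigma * {set T})) : (T -> C) * R :=
  if u is (t, B) :: u' then
    let v' := mulmxv (qU M t) v in
    let r := micro_run (fun q => if q \in B then 0 else v' q) u' in
    (r.1, mass (A' :&: B) v' + r.2)
  else (v, 0).

Definition slot_mass P : R := \sum_(i : 'I_k.+1 | i != ord0) mass A' (fun q => P (q, i)).

Lemma swapv_act_slot0 B J U P : J != ord0 -> (forall q, P (q, J) = 0) ->
  swapv B J (act_slot0 U P) = fun x =>
    let w := mulmxv U (fun q => P (q, ord0)) x.1 in
    if x.2 == ord0 then (if x.1 \in B then 0 else w)
    else if x.2 == J then (if x.1 \in B then w else 0)
    else P x.
Proof.
move=> J0 PJ; apply: functional_extensionality => -[q i] /=.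
rewrite /swapv /swap_slot /act_slot0 /=.
case: (boolP (q \in B)) => qB /=; last first.
  by case: (eqVneq i ord0) => // i0; case: eqP => // ->; rewrite PJ.
case: (eqVneq i ord0) => [->|i0]; first by rewrite tpermL (negbTE J0) PJ.
case: (eqVneq i J) => [->|iJ]; first by rewrite tpermR eqxx.
by rewrite tpermD ?(negbTE i0) // eq_sym.
Qed.

Lemma slot_mass_swapv_act_slot0 B J U P : J != ord0 -> (forall q, P (q, J) = 0) ->
  slot_mass (swapv B J (act_slot0 U P)) =
  slot_mass P + mass (A' :&: B) (mulmxv U (fun q => P (q, ord0))).
Proof.
move=> J0 PJ; rewrite /slot_mass (bigD1 J) //= [in RHS](bigD1 J) //= swapv_act_slot0 //.
have -> : mass A' (fun q => P (q, J)) = 0 by rewrite /mass big1 // => q _; rewrite PJ sqmod0.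
rewrite add0r addrC; congr (_ + _).
  apply: eq_bigr => i /andP [i0 iJ]; congr (mass _ _); apply: functional_extensionality => q.
  by rewrite /= (negbTE i0) (negbTE iJ).
rewrite /mass big_mkcond [RHS]big_mkcond; apply: eq_bigr => q _.
rewrite /= (negbTE J0) eqxx !inE.
by case: (q \in A'); case: (q \in B); rewrite ?sqmod0.
Qed.

Lemma macro_sim u : forall (j : nat) P v,
  (0 < j)%N -> (j + size u <= k.+1)%N ->
  (forall q, P (q, ord0) = v q) ->
  (forall q (i : 'I_k.+1), (j <= i)%N -> P (q, i) = 0) ->
  [/\ forall q, macro j u P (q, ord0) = (micro_run v u).1 q,
      forall q (i : 'I_k.+1), (j + size u <= i)%N -> macro j u P (q, i) = 0 &
      slot_mass (macro j u P) = slot_mass P + (micro_run v u).2].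
Proof.
elim: u => [|[t B] u IH] j P v j_gt0 j_le P0 P_j /=.
  by split => [//|q i|]; rewrite ?addn0 ?addr0 //; apply: P_j.
have j_lt : (j < k.+1)%N by apply: leq_trans j_le; rewrite addnS ltnS leq_addr.
set J : 'I_k.+1 := inord j.
have JE : nat_of_ord J = j by rewrite inordK.
have J0 : J != ord0 by rewrite -val_eqE /= JE -lt0n.
have P_J : forall q, P (q, J) = 0 by move=> q; rewrite P_j // JE.
have P0E : (fun q => P (q, ord0)) = v by apply: functional_extensionality.
set w := mulmxv (qU M t) v.
set P1 := swapv B J (act_slot0 (qU M t) P).
have P1_0 : forall q, P1 (q, ord0) = if q \in B then 0 else w q.
  by move=> q; rewrite /P1 swapv_act_slot0 //= P0E.
have P1_j : forall q (i : 'I_k.+1), (j.+1 <= i)%N -> P1 (q, i) = 0.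
  move=> q i ji.
  have i0 : i != ord0 by rewrite -val_eqE /= -lt0n (leq_trans _ ji).
  have iJ : i != J by rewrite -val_eqE /= JE gtn_eqF.
  by rewrite /P1 swapv_act_slot0 //= (negbTE i0) (negbTE iJ) P_j // ltnW.
have j1_le : (j.+1 + size u <= k.+1)%N by rewrite addSn -addnS.
have [IH0 IHj IHmass] := IH j.+1 P1 _ isT j1_le P1_0 P1_j.
split => [//|q i ji|]; first by apply: IHj; rewrite addSn -addnS.
by rewrite IHmass /P1 slot_mass_swapv_act_slot0 // P0E addrA.
Qed.

Definition slot_acc : {set S} := [set x | (x.2 != ord0) && (x.1 \in A')].
Definition slot_rej : {set S} := [set x | (x.2 != ord0) && (x.1 \notin A')].

Lemma slot_acc_rej_disjoint : [disjoint slot_acc & slot_rej].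
Proof. by apply/pred0P => x /=; rewrite !inE; case: (x.1 \in A'); rewrite ?andbF. Qed.

Definition macro_qfa : qfa S :=
  qfa_of_isometries (fun s => macro_isometric (micro s) 1) (qstart M, ord0) slot_acc_rej_disjoint.

Definition embed_slot0 v : S -> C := fun x => if x.2 == ord0 then v x.1 else 0.

Fixpoint macro_ref v (l : seq (option Sigma)) : R :=
  if l is s :: l' then (micro_run v (micro s)).2 + macro_ref (micro_run v (micro s)).1 l' else 0.

Lemma in_live_macro_qfa x : (x \in live macro_qfa) = (x.2 == ord0).
Proof. by rewrite !inE; case: (x.2 == ord0); case: (x.1 \in A'). Qed.

Lemma mass_slot_acc P : mass slot_acc P = slot_mass P.
Proof.
rewrite /mass /slot_mass big_mkcond sum_slots (bigD1 ord0) //= big1 ?add0r => [|q _];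
  last by rewrite inE eqxx.
apply: eq_bigr => i i0; rewrite /mass [RHS]big_mkcond; apply: eq_bigr => q _.
by rewrite !inE /= i0.
Qed.

Lemma mulmxv_macro_qfa s P : mulmxv (qU macro_qfa s) P = macro 1 (micro s) P.
Proof. exact: (mulmxv_qfa_of_isometries (fun t => macro_linear (micro t) 1)). Qed.

Lemma slot_mass_embed_slot0 v : slot_mass (embed_slot0 v) = 0.
Proof. by apply: big1 => i i0; apply: big1 => q _; rewrite /embed_slot0 /= (negbTE i0) sqmod0. Qed.

Lemma run_macro_qfa l v : (run macro_qfa (embed_slot0 v) l).1.2 = macro_ref v l.
Proof.
elim: l v => [//|s l IH] v /=.
have embed_slot0_slots : forall q (i : 'I_k.+1), (1 <= i)%N -> embed_slot0 v (q, i) = 0.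
  by move=> q i i_gt0; rewrite /embed_slot0 /= -val_eqE /= eqn0Ngt i_gt0.
have [sim0 _ sim_mass] :=
  @macro_sim (micro s) 1 (embed_slot0 v) v isT (micro_size s) (fun q => erefl) embed_slot0_slots.
rewrite mulmxv_macro_qfa.
have -> : proj_live macro_qfa (macro 1 (micro s) (embed_slot0 v)) =
          embed_slot0 (micro_run v (micro s)).1.
  apply: functional_extensionality => -[q i].
  by rewrite /proj_live in_live_macro_qfa /embed_slot0 /=; case: eqP => // ->.
by rewrite IH mass_slot_acc sim_mass slot_mass_embed_slot0 add0r.
Qed.

Lemma accp_macro_qfa x :
  accp macro_qfa x = macro_ref (basis_vec (qstart M)) (rcons (map Some x) None).
Proof.
rewrite -run_macro_qfa /accp; congr (run _ _ _).1.2.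
apply: functional_extensionality => -[q i]; rewrite /basis_vec /embed_slot0 xpair_eqE /=.
by case: (i == ord0); rewrite ?andbT ?andbF.
Qed.

End Macro.

Lemma proj_liveE T (M : qfa T) v :
  (fun q => if q \in ~: live M then 0 else v q) = proj_live M v.
Proof. by apply: functional_extensionality => q; rewrite /proj_live inE; case: (q \in live M). Qed.

Section Complement.
Variables (T : finType) (M : qfa T).

(* At the end-marker every state is dumped, so the mass that M rejects or that
   never halts becomes acceptance. *)
Definition micro_compl (s : option Sigma) : seq (option Sigma * {set T}) :=
  if s is Some a then [:: (Some a, ~: live M)] else [:: (None, setT)].

Lemma micro_compl_size s : (size (micro_compl s) <= 1)%N.
Proof. by case: s. Qed.

Definition compl_qfa := macro_qfa M 1 (~: qacc M) micro_compl.

Lemma setC_acc_halting : ~: qacc M :&: ~: live M = qrej M.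
Proof.
apply/setP => q; rewrite !inE negbK.
by case: (boolP (q \in qacc M)) => [/(disjointFr (qacc_rej_disjoint M)) ->|].
Qed.

Lemma macro_ref_compl x v :
  macro_ref M (~: qacc M) micro_compl v (rcons (map Some x) None) =
  norm2 v - (run M v (rcons (map Some x) None)).1.2.
Proof.
elim: x v => [|a x IH] v /=.
  by rewrite setIT !addr0 -(norm2_mulmxv M None v) -(mass_setC (qacc M)) addrC addKr.
rewrite setC_acc_halting proj_liveE addr0 IH -(norm2_mulmxv M (Some a) v).
by rewrite [norm2 (mulmxv _ _)](norm2_split M); ring.
Qed.

Lemma accp_compl_qfa x : accp compl_qfa x = 1 - accp M x.
Proof. by rewrite (accp_macro_qfa _ _ micro_compl_size) macro_ref_compl norm2_basis_vec. Qed.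

Lemma qfa_accepts_compl L lam e :
  qfa_accepts M L lam e -> qfa_accepts compl_qfa (fun x => ~ L x) (1 - lam) e.
Proof.
move=> [e_gt0 M_L]; split => // x; rewrite accp_compl_qfa.
by split => [/(M_L x).2 | /NNPP /(M_L x).1]; lra.
Qed.

End Complement.

Section Substitution.
Variables (T : finType) (M : qfa T) (g : option Sigma -> seq (option Sigma)).

Definition subst_size : nat := \max_s size (g s).
Definition micro_subst s : seq (option Sigma * {set T}) := [seq (t, ~: live M) | t <- g s].

Lemma micro_subst_size s : (size (micro_subst s) <= subst_size)%N.
Proof. by rewrite size_map; exact: (leq_bigmax (F := fun s => size (g s))). Qed.

Definition subst_qfa := macro_qfa M subst_size (qacc M) micro_subst.

Lemma qacc_halting : qacc M :&: ~: live M = qacc M.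
Proof. by apply/setIidPl/subsetP => q qA; rewrite !inE qA. Qed.

Lemma micro_run_subst v u :
  micro_run M (qacc M) v [seq (t, ~: live M) | t <- u] = ((run M v u).1.1, (run M v u).1.2).
Proof.
elim: u v => [|t u IH] v //=.
by rewrite proj_liveE IH qacc_halting.
Qed.

Lemma macro_ref_subst v l :
  macro_ref M (qacc M) micro_subst v l = (run M v (flatten (map g l))).1.2.
Proof.
elim: l v => [|s l IH] v //=.
by rewrite /micro_subst micro_run_subst IH run_cat.
Qed.

Lemma qfa_accepts_subst (f : seq Sigma -> seq Sigma) L lam e :
  (forall x, flatten (map g (rcons (map Some x) None)) = rcons (map Some (f x)) None) ->
  qfa_accepts M L lam e -> qfa_accepts subst_qfa (fun x => L (f x)) lam e.
Proof.
move=> gf [e_gt0 M_L]; split => // x.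
by rewrite (accp_macro_qfa _ _ micro_subst_size) macro_ref_subst gf; exact: M_L.
Qed.

End Substitution.

Definition hom_subst (h : seq Sigma -> seq Sigma) (s : option Sigma) : seq (option Sigma) :=
  if s is Some a then map Some (h [:: a]) else [:: None].

Definition rquot_subst (w : seq Sigma) (s : option Sigma) : seq (option Sigma) :=
  if s is Some a then [:: Some a] else rcons (map Some w) None.

Lemma flatten_hom_subst h : monoid_hom h ->
  forall x, flatten (map (hom_subst h) (rcons (map Some x) None)) = rcons (map Some (h x)) None.
Proof.
move=> [h_nil h_cat] x; rewrite map_rcons flatten_rcons -cats1; congr (_ ++ _).
elim: x => [|a x IH] /=; first by rewrite h_nil.
by rewrite IH -map_cat -h_cat.
Qed.

Lemma flatten_rquot_subst w x :
  flatten (map (rquot_subst w) (rcons (map Some x) None)) = rcons (map Some (x ++ w)) None.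
Proof.
rewrite map_rcons flatten_rcons map_cat rcons_cat; congr (_ ++ _).
by elim: x => [|a x IH] //=; rewrite IH.
Qed.

Section Householder.
Variable T : finType.

Definition householder (u P : T -> C) : T -> C := fun x => P x - 2 / dotv u u * dotv u P * u x.

Section Reflection.
Variable u : T -> C.
Local Notation k := (2 / dotv u u).

(* Also for [u = 0], where [k = 2 / 0 = 0]. *)
Lemma householder_coef : k * k * dotv u u = 2 * k.
Proof. by case: (eqVneq (dotv u u) 0) => [->|u0]; rewrite ?invr0 ?mulr0 //; field. Qed.

Lemma householder_coef_real : k^* = k.
Proof. by rewrite rmorphM fmorphV /= dotvC rmorph_nat. Qed.

Lemma householder_linear : linearf (householder u).
Proof.
move=> J c g; apply: functional_extensionality => x; rewrite /householder dotv_sumr.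
by rewrite mulr_sumr mulr_suml -sumrB; apply: eq_bigr => j _; ring.
Qed.

Lemma householder_isometric : isometric (householder u).
Proof.
move=> a b; rewrite /householder dotvBl !dotvBr !dotvZl !dotvZr rmorphM /= householder_coef_real.
apply/eqP; rewrite -subr_eq0 dotvC; apply/eqP.
transitivity (dotv a u * dotv u b * (k * k * dotv u u - 2 * k)); first by ring.
by rewrite householder_coef subrr mulr0.
Qed.

Lemma householderK : involutive (householder u).
Proof.
move=> P; apply: functional_extensionality => x.
rewrite {1}/householder dotvBr dotvZr /householder; apply/eqP; rewrite -subr_eq0; apply/eqP.
transitivity (dotv u P * u x * (k * k * dotv u u - 2 * k)); first by ring.
by rewrite householder_coef subrr mulr0.
Qed.

Lemma householder_id P x : u x = 0 -> householder u P x = P x.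
Proof. by move=> ux0; rewrite /householder ux0 mulr0 subr0. Qed.

End Reflection.

Lemma householder_swap a b : dotv a a = dotv b b -> (dotv a b)^* = dotv a b ->
  householder (fun x => a x - b x) a = b.
Proof.
move=> ab_norm ab_real; set u := fun x => a x - b x.
have uu : dotv u u = 2 * (dotv a a - dotv a b).
  by rewrite dotvBl !dotvBr -[dotv b a]dotvC ab_real -ab_norm; ring.
have ua : dotv u a = dotv a a - dotv a b by rewrite dotvBl -[dotv b a]dotvC ab_real.
apply: functional_extensionality => x; rewrite /householder ua uu.
have [ab0|ab0] := eqVneq (dotv a a - dotv a b) 0.
  have /norm2_eq0 u0 : norm2 u = 0 by apply: (@complexI R); rewrite norm2_dotv uu ab0 mulr0.
  have ux : u x = 0 by rewrite u0.
  by rewrite ux mulr0 subr0; exact: subr0_eq ux.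
by rewrite invfM mulrA divff ?pnatr_eq0 // mul1r mulVf // mul1r /u opprB addrC subrK.
Qed.

End Householder.

Section ReflectedQFA.
Variables (T : finType) (M : qfa T) (u : T -> C) (q : T).
(* So the reflection fixes the halting states and commutes with measurement. *)
Hypothesis u_live : forall x, x \notin live M -> u x = 0.
Local Notation H := (householder u).

Lemma reflected_linear s : linearf (fun P => H (mulmxv (qU M s) (H P))).
Proof.
exact: linearf_comp (householder_linear u) (linearf_comp (mulmxv_linear _) (householder_linear u)).
Qed.

Lemma reflected_isometric s : isometric (fun P => H (mulmxv (qU M s) (H P))).
Proof.
exact: isometric_comp (householder_isometric u)
  (isometric_comp (mulmxv_isometric (qU_orthonormal M s)) (householder_isometric u)).
Qed.

Definition reflected_qfa : qfa T := qfa_of_isometries reflected_isometric q (qacc_rej_disjoint M).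

Lemma mulmxv_reflected_qfa s P : mulmxv (qU reflected_qfa s) P = H (mulmxv (qU M s) (H P)).
Proof. exact: (mulmxv_qfa_of_isometries reflected_linear). Qed.

Lemma householder_proj_live P : H (proj_live M P) = proj_live M (H P).
Proof.
have u_proj : dotv u (proj_live M P) = dotv u P.
  apply: eq_bigr => x _; rewrite /proj_live; case: ifP => // /negbT /u_live ->.
  by rewrite conjC0 !mul0r.
apply: functional_extensionality => x; rewrite /proj_live.
case: ifP => [x_live|/negbT x_halt]; first by rewrite /householder u_proj /proj_live x_live.
by rewrite householder_id ?u_live // /proj_live (negbTE x_halt).
Qed.

Lemma mass_householder (A : {set T}) P :
  {subset A <= ~: live M} -> mass A (H P) = mass A P.
Proof.
move=> A_halt; apply: eq_bigr => x /A_halt.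
by rewrite inE => /u_live /householder_id ->.
Qed.

Lemma run_reflected_qfa P l :
  run reflected_qfa (H P) l = let r := run M P l in (H r.1.1, r.1.2, r.2).
Proof.
elim: l P => [//|s l IH] P /=.
rewrite mulmxv_reflected_qfa householderK.
have -> : proj_live reflected_qfa (H (mulmxv (qU M s) P)) = H (proj_live M (mulmxv (qU M s) P)).
  by rewrite householder_proj_live.
rewrite IH /= !mass_householder // => x; rewrite !inE negbK => ->; rewrite ?orbT //.
Qed.

Lemma accp_reflected_qfa x :
  accp reflected_qfa x = (run M (H (basis_vec q)) (rcons (map Some x) None)).1.2.
Proof.
by rewrite /accp -{1}(householderK u (basis_vec q)) run_reflected_qfa.
Qed.

End ReflectedQFA.

Lemma prepare_live_state (T : finType) (M : qfa T) (psi : T -> C) q :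
  psi q != 0 -> (forall x, x \notin live M -> psi x = 0) ->
  exists M' : qfa T, forall x,
    (run M psi (rcons (map Some x) None)).1.2 = norm2 psi * accp M' x.
Proof.
move=> psi_q psi_live; have [c [c_n c_real]] := unit_rescaling psi_q.
have q_live : q \in live M by apply: contraR psi_q => /psi_live ->.
have b_unit : dotv (basis_vec q) (basis_vec q) = dotv (scalev c psi) (scalev c psi).
  by rewrite -!norm2_dotv norm2_basis_vec norm2_scalev c_n mulVf // lt0r_neq0 // (norm2_gt0 psi_q).
have u_live : forall x, x \notin live M -> basis_vec q x - scalev c psi x = 0.
  move=> x x_halt; rewrite /scalev psi_live // mulr0 subr0 /basis_vec.
  by case: eqP x_halt => // ->; rewrite q_live.
(* The reflection along [e_q - c psi] maps [e_q] to the unit vector [c psi]. *)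
exists (reflected_qfa M (fun x => basis_vec q x - scalev c psi x) q) => x.
rewrite accp_reflected_qfa // householder_swap //; last by rewrite dotv_basisl.
by rewrite run_scalev /= c_n mulrA mulfV ?mul1r // lt0r_neq0 // (norm2_gt0 psi_q).
Qed.

Lemma RMM_constant_accp eps T (M : qfa T) L lam e (f : seq Sigma -> seq Sigma) a :
  eps <= e -> qfa_accepts M L lam e -> (forall x, accp M (f x) = a) ->
  RMM eps (fun x => L (f x)).
Proof.
move=> le_eps [e_gt0 M_L] Mf_a.
have [lt_lam_a | le_a_lam] := ltrP lam a.
  apply: (RMM_qfa (M := M) (lam := -1 - e)) le_eps _; split => // x; split => [_|Lfx].
    by have := accp_ge0 M x; lra.
  by have := (M_L (f x)).2 Lfx; rewrite Mf_a; lra.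
apply: (RMM_qfa (M := M) (lam := 2 + e)) le_eps _; split => // x; split => [Lfx|_].
  by have := (M_L (f x)).1 Lfx; rewrite Mf_a; lra.
by have := accp_le1 M x; lra.
Qed.

Lemma qfa_accepts_affine T T' (M : qfa T) (M' : qfa T') L lam e (f : seq Sigma -> seq Sigma) a n :
  0 < n -> (forall x, accp M (f x) = a + n * accp M' x) ->
  qfa_accepts M L lam e -> qfa_accepts M' (fun x => L (f x)) ((lam - a) / n) (e / n).
Proof.
move=> n_gt0 MM' [e_gt0 M_L]; split => [|x]; first exact: divr_gt0.
have := M_L (f x); rewrite MM' -mulrDl -mulrBl ltr_pdivrMr // ltr_pdivlMr //.
by case=> L_acc notL_acc; split => [/L_acc | /notL_acc]; lra.
Qed.

Lemma RMM_lquot eps T (M : qfa T) L lam e w :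
  eps <= e -> qfa_accepts M L lam e -> RMM eps (fun x => L (w ++ x)).
Proof.
move=> le_eps M_L; case: w => [|a w]; first exact: RMM_qfa le_eps M_L.
set r := run M (basis_vec (qstart M)) (map Some (a :: w)).
have accp_cat x : accp M (a :: w ++ x) = r.1.2 + (run M r.1.1 (rcons (map Some x) None)).1.2.
  by rewrite /accp -cat_cons map_cat rcons_cat run_cat.
have [psi0 | [q psi_q]] := vec0_or_support r.1.1.
  apply: (RMM_constant_accp le_eps M_L (a := r.1.2)) => x.
  by rewrite accp_cat psi0 run0 addr0.
have [M' M'_acc] := prepare_live_state psi_q (@run_cons_live _ M (Some a) _ _).
have n_gt0 := norm2_gt0 psi_q.
have n_le1 : norm2 r.1.1 <= 1.
  have := run_conserv M (map Some (a :: w)) (basis_vec (qstart M)).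
  have [? ?] := run_ge0 M (map Some (a :: w)) (basis_vec (qstart M)).
  by rewrite norm2_basis_vec -/r; lra.
apply: (RMM_qfa (M := M')) _ (qfa_accepts_affine n_gt0 _ M_L) => [|x]; last first.
  by rewrite accp_cat M'_acc.
by case: M_L => e_gt0 _; apply: le_trans le_eps _; rewrite ler_pdivlMr //; nra.
Qed.

End MMQFAClosure.

Theorem theorem4p1 (R : realType) (Sigma : finType) (eps : R)
  (L : seq Sigma -> Prop) :
  RMM eps L ->
  [/\ RMM eps (fun x => ~ L x),
      (forall h : seq Sigma -> seq Sigma, monoid_hom h -> RMM eps (fun x => L (h x))),
      (forall w : seq Sigma, RMM eps (fun x => L (w ++ x)))
    & (forall w : seq Sigma, RMM eps (fun x => L (x ++ w)))].
Proof.
case/qfa_of_RMM => T [M [lam [e [le_eps M_L]]]]; split.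
- exact: RMM_qfa le_eps (qfa_accepts_compl M_L).
- move=> h h_hom; apply: RMM_qfa le_eps (qfa_accepts_subst _ M_L).
  exact: flatten_hom_subst.
- by move=> w; exact: RMM_lquot le_eps M_L.
- move=> w; apply: RMM_qfa le_eps (qfa_accepts_subst _ M_L).
  exact: flatten_rquot_subst.
Qed.
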